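(* Let $\mathcal{H}$ be a hereditary $\sigma$-ring of sets, let $\mu^*$ be an outer measure on $\mathcal{H}$, let $X$ be a set with $X\cap\bigcup\mathcal{H}\neq\emptyset$, and let $\overline{\overline{S}}$ be the class of all $\mu^{**}$-measurable sets. Then $\overline{\overline{S}}$ is a ring of sets, i.e. $L\cup M\in\overline{\overline{S}}$ and $M-L\in\overline{\overline{S}}$ whenever $L,M\in\overline{\overline{S}}$.
   Context: A nonempty class $\mathcal{E}$ of sets is hereditary if $F\in\mathcal{E}$ whenever $E\in\mathcal{E}$ and $F\subseteq E$. A set $E\in\mathcal{H}$ is $\mu^*$-measurable if $\mu^*(A)=\mu^*(A\cap E)+\mu^*(A\cap E')$ for every $A\in\mathcal{H}$, where $E'$ denotes the complement of $E$. Let $\overline{S}$ denote the class of all $\mu^*$-measurable sets. Let $K=\{B\subseteq X: B\cap E\in\mathcal{H}\text{ for all }E\in\mathcal{H}\}$. A set $Q\in K$ is called $\mu^{**}$-measurable if $Q\cap E$ is $\mu^*$-measurable for every $\mu^*$-measurable $E\in\mathcal{H}$, i.e. for all $A\in\mathcal{H}$ and all $E\in\overline{S}$, $\mu^*(A)=\mu^*[A\cap(Q\cap E)]+\mu^*[A\cap(Q\cap E)']$. *)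

From HB Require Import structures.
From mathcomp Require Import all_boot all_order all_algebra.
From mathcomp Require Import boolp classical_sets functions reals constructive_ereal ereal sequences.
Set Implicit Arguments. Unset Strict Implicit. Unset Printing Implicit Defensive.
Import Order.TTheory GRing.Theory Num.Theory.
Local Open Scope classical_set_scope.
Local Open Scope ereal_scope.

Definition hereditary {T} (H : set (set T)) : Prop :=
  H !=set0 /\ (forall E F, H E -> F `<=` E -> H F).

Definition sigma_ring {T} (H : set (set T)) : Prop :=
  [/\ H !=set0,
      (forall E F, H E -> H F -> H (E `\` F)) &
      (forall F : nat -> set T, (forall n, H (F n)) -> H (\bigcup_n F n))].

Definition outer_measure_on {T} {R : realType} (H : set (set T))
    (mu : set T -> \bar R) : Prop :=
  [/\ mu set0 = 0,
      (forall A, H A -> 0 <= mu A),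
      (forall A B, H A -> H B -> A `<=` B -> mu A <= mu B) &
      (forall F : nat -> set T, (forall n, H (F n)) ->
         mu (\bigcup_n F n) <= \sum_(0 <= n <oo) mu (F n))].

Definition mu_measurable {T} {R : realType} (H : set (set T))
    (mu : set T -> \bar R) (E : set T) : Prop :=
  H E /\ forall A, H A -> mu A = mu (A `&` E) + mu (A `&` ~` E).

Definition classK {T} (H : set (set T)) (X : set T) : set (set T) :=
  [set B | B `<=` X /\ forall E, H E -> H (B `&` E)].

Definition mu2_measurable {T} {R : realType} (H : set (set T))
    (mu : set T -> \bar R) (X : set T) (Q : set T) : Prop :=
  classK H X Q /\
  forall A E, H A -> mu_measurable H mu E ->
    mu A = mu (A `&` (Q `&` E)) + mu (A `&` ~` (Q `&` E)).

From HB Require Import structures.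
From mathcomp Require Import all_boot all_order all_algebra.
From mathcomp Require Import boolp classical_sets functions reals constructive_ereal ereal sequences.
Import Order.TTheory GRing.Theory Num.Theory.
Local Open Scope classical_set_scope.
Local Open Scope ereal_scope.

(* For E mu*-measurable, Q mu**-measurable means exactly that Q `&` E is
   mu*-measurable, and (L `|` M) `&` E, (M `\` L) `&` E are the union and the
   difference of L `&` E and M `&` E. *)

Section MeasurableRing.
Variables (T : Type) (R : realType) (H : set (set T)) (mu : set T -> \bar R).
Hypothesis H_sub : forall E F, H E -> F `<=` E -> H F.

Lemma mu_measurableU E F : mu_measurable H mu E -> mu_measurable H mu F ->
  H (E `|` F) -> mu_measurable H mu (E `|` F).
Proof.
move=> [_ mE] [_ mF] HEF; split=> // A HA.
have HAE' : H (A `&` ~` E) by apply: H_sub HA _; apply: subIsetl.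
have HAEF : H (A `&` (E `|` F)) by apply: H_sub HA _; apply: subIsetl.
rewrite (mE A HA) (mF _ HAE') (mE _ HAEF) -addeA.
have -> : A `&` (E `|` F) `&` E = A `&` E by rewrite -setIA setUK.
have -> : A `&` (E `|` F) `&` ~` E = A `&` ~` E `&` F.
  by rewrite -setIA setIUl setICr set0U setIA setIAC.
by rewrite setCU setIA.
Qed.

Lemma mu_measurableD E F : mu_measurable H mu E -> mu_measurable H mu F ->
  H (E `\` F) -> mu_measurable H mu (E `\` F).
Proof.
move=> [_ mE] [_ mF] HEF; split=> // A HA.
have HAE : H (A `&` E) by apply: H_sub HA _; apply: subIsetl.
have HAEF' : H (A `&` ~` (E `\` F)) by apply: H_sub HA _; apply: subIsetl.
rewrite (mE A HA) (mF _ HAE) (mE _ HAEF') addeCA addeA.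
have -> : A `&` ~` (E `\` F) `&` E = A `&` E `&` F.
  by rewrite setCD -setIA setIUl setICl set0U setIA setIAC.
have -> : A `&` ~` (E `\` F) `&` ~` E = A `&` ~` E.
  by rewrite setCD -setIA setUK.
by rewrite setDE setIA.
Qed.

Lemma mu2_measurableI_mu_measurable X Q E :
  mu2_measurable H mu X Q -> mu_measurable H mu E ->
  mu_measurable H mu (Q `&` E).
Proof. by move=> [[_ KQ] mQ] mE; split=> [|A HA]; [exact: KQ mE.1 | exact: mQ]. Qed.

Lemma mu2_measurable_intro X Q :
  Q `<=` X -> (forall E, H E -> H (Q `&` E)) ->
  (forall E, mu_measurable H mu E -> mu_measurable H mu (Q `&` E)) ->
  mu2_measurable H mu X Q.
Proof. by move=> QX KQ mQ; split=> [//|A E HA /mQ [_]]; exact. Qed.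

Section Pair.
Variables (X L M : set T).
Hypotheses (mL : mu2_measurable H mu X L) (mM : mu2_measurable H mu X M).

Lemma mu2_measurableU : mu2_measurable H mu X (L `|` M).
Proof.
have [[LX _] _] := mL; have [[MX _] _] := mM.
apply: mu2_measurable_intro => [x [/LX|/MX] //|E HE|E mE].
  by apply: H_sub HE _; apply: subIsetr.
rewrite setIUl; apply: mu_measurableU.
- exact: mu2_measurableI_mu_measurable mL mE.
- exact: mu2_measurableI_mu_measurable mM mE.
- by apply: H_sub mE.1 _; rewrite -setIUl; apply: subIsetr.
Qed.

Lemma mu2_measurableD : mu2_measurable H mu X (M `\` L).
Proof.
have [[MX _] _] := mM.
apply: mu2_measurable_intro => [x [/MX] //|E HE|E mE].
  by apply: H_sub HE _; apply: subIsetr.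
have -> : (M `\` L) `&` E = (M `&` E) `\` (L `&` E).
  by rewrite !setDE setCI setIUr setICK setU0 setIAC.
apply: mu_measurableD.
- exact: mu2_measurableI_mu_measurable mM mE.
- exact: mu2_measurableI_mu_measurable mL mE.
- by apply: H_sub mE.1 _ => x [[_ ?]].
Qed.

End Pair.
End MeasurableRing.

Theorem theorem3p1 (T : Type) (R : realType) (H : set (set T))
    (mu : set T -> \bar R) (X : set T) :
  hereditary H -> sigma_ring H -> outer_measure_on H mu ->
  X `&` \bigcup_(E in H) E !=set0 ->
  forall L M, mu2_measurable H mu X L -> mu2_measurable H mu X M ->
    mu2_measurable H mu X (L `|` M) /\ mu2_measurable H mu X (M `\` L).
Proof.
move=> [_ H_sub] _ _ _ L M mL mM.
by split; [exact: mu2_measurableU | exact: mu2_measurableD].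
Qed.
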